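(* Consider an instance of the multi-vehicle dial-a-ride problem with vehicle locations $o_1,\dots,o_h$, capacity $\lambda$, and requests $(s_1,t_1),\dots,(s_m,t_m)$ in a metric $w$. Let $\mathcal{T}_s$ and $\mathcal{T}_t$ be sets of tours such that for each vehicle $o_{i'}$ there is exactly one tour $T_s=o_{i'}s_{j_1}s_{j_2}\dots s_{j_q}\in\mathcal{T}_s$ and exactly one tour $T_t=o_{i'}t_{j_1}t_{j_2}\dots t_{j_q}\in\mathcal{T}_t$ (same index sequence), and every request index appears in exactly one of these index sequences. For each such pair (writing $a_k=s_{j_k}$, $b_k=t_{j_k}$), build a route $W_{o_{i'}}$ as follows. If $q\le\lambda$, let $W_{o_{i'}}=o_{i'}a_1\dots a_q b_1\dots b_q$. If $q>\lambda$, choose $\theta$ uniformly at random from $\{1,\dots,\lambda\}$, let $N_\theta=\lceil (q-\theta)/\lambda\rceil+1$, split the index range $1,\dots,q$ into consecutive blocks $I_1=\{1,\dots,\theta\}$, $I_2=\{\theta+1,\dots,\theta+\lambda\}$, $\dots$, $I_{N_\theta}=\{\theta+\lambda(N_\theta-2)+1,\dots,q\}$, and let $W_{o_{i'}}$ be the walk starting at $o_{i'}$ that, for $j=1,\dots,N_\theta$ in order, visits $a_k$ for $k\in I_j$ in increasing order of $k$ and then $b_k$ for $k\in I_j$ in increasing order of $k$. Let $\mathcal{W}$ be the set of all routes built. Then $$\mathbb{E}[w(\mathcal{W})]\le \frac{2}{\lambda}\sum_{j=1}^m w(s_j,t_j)+3\big(w(\mathcal{T}_s)+w(\mathcal{T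}_t)\big).$$
   Context: The metric $w$ satisfies $w(a,a)=0$, symmetry and the triangle inequality. The weight of a walk $v_1v_2\dots v_q$ is $\sum_{j=1}^{q-1}w(v_j,v_{j+1})$; the weight of a tour $v_1v_2\dots v_q$ is $\sum_{j=1}^{q-1}w(v_j,v_{j+1})+w(v_q,v_1)$; the weight of a set of walks or tours is the sum of their weights. Sources, destinations and vehicle locations are treated as pairwise distinct points (possibly at distance $0$). *)

From HB Require Import structures.
From mathcomp Require Import all_boot all_order all_algebra.
Set Implicit Arguments. Unset Strict Implicit. Unset Printing Implicit Defensive.
Import Order.TTheory GRing.Theory Num.Theory.
Local Open Scope ring_scope.

(* Points of an instance with h vehicles and m requests: vehicle locations
   o_i, sources s_j, destinations t_j -- pairwise distinct by construction. *)
Inductive point (h m : nat) : Type :=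
  | Veh of 'I_h
  | Src of 'I_m
  | Dst of 'I_m.

Section Weights.
Variables (R : numDomainType) (P : Type) (w : P -> P -> R).

Fixpoint walkw (x : P) (r : seq P) : R :=
  match r with
  | [::] => 0
  | y :: r' => w x y + walkw y r'
  end.

Definition walk_weight (p : seq P) : R :=
  if p is x :: r then walkw x r else 0.

Definition tour_weight (p : seq P) : R :=
  if p is x :: r then walkw x r + w (last x r) x else 0.
End Weights.

(* Block I_j (j = 1..N) of the index sequence J (positions are 1-based in the
   paper): I_1 = positions 1..theta, I_j = positions theta+lam(j-2)+1 ..
   min(q, theta+lam(j-1)) for j >= 2. *)
Definition block {T : Type} (lam theta : nat) (J : seq T) (j : nat) : seq T :=
  if j == 1%N then take theta J
  else take lam (drop (theta + lam * (j - 2)) J).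

(* The route W_o built from vehicle location o and index sequence J
   (a_k = Src (J_k), b_k = Dst (J_k)), with random parameter theta. *)
Definition route {h m : nat} (lam theta : nat) (o : point h m)
    (J : seq 'I_m) : seq (point h m) :=
  let q := size J in
  if (q <= lam)%N then o :: (map (@Src h m) J ++ map (@Dst h m) J)
  else
    let N := ((q - theta + lam.-1) %/ lam + 1)%N in   (* ceil((q-theta)/lam)+1 *)
    let blk j := block lam theta J j in
    o :: flatten [seq map (@Src h m) (blk j) ++ map (@Dst h m) (blk j)
                 | j <- iota 1 N].

(* In a block whose last request is e, the jump from a_e back to the
   first destination costs at most w(a_e, b_e) plus the destination walk of the
   block, and the jump from b_e to the next source at most w(b_e, a_e) plus an
   edge of the source tour; the last block is instead joined to its
   destinations through the vehicle location.  Hence the route weighs at most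
   w(T_s) + 3 w(T_t) + 2 sum_e w(a_e, b_e), summed over the last requests e of
   the non-final blocks.  For theta = t + 1 these sit at the positions of J
   congruent to t modulo lam, so over the lam values of theta each request is
   charged at most once, which gives the factor 2 / lam on average; the
   vehicles partition the requests. *)

From HB Require Import structures.
From mathcomp Require Import all_boot all_order all_algebra.
From mathcomp Require Import lra zify.
Set Implicit Arguments. Unset Strict Implicit. Unset Printing Implicit Defensive.
Import Order.TTheory GRing.Theory Num.Theory.

Lemma leq_mul_ceil k x : 0 < k -> x <= k * ((x + k.-1) %/ k).
Proof.
move=> k_gt0; have := ltn_pmod (x + k.-1) k_gt0.
rewrite {1}(divn_eq (x + k.-1) k); lia.
Qed.

Lemma ltn_mul_ceil_pred k x : 0 < k -> 0 < x -> k * ((x + k.-1) %/ k).-1 < x.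
Proof.
move=> k_gt0 x_gt0; have := divn_eq (x + k.-1) k.
by case: ((x + k.-1) %/ k) => [|q] /=; lia.
Qed.

Lemma flatten_take_drop_mul (T : Type) k n (s : seq T) :
  flatten [seq take k (drop (k * i) s) | i <- iota 0 n] = take (k * n) s.
Proof.
elim: n => [|n IH]; first by rewrite muln0 take0.
by rewrite -addn1 iotaD map_cat flatten_cat IH /= cats0 add0n mulnDr muln1 takeD.
Qed.

Lemma take_drop_last (T : eqType) (x : T) (s : seq T) i k :
  0 < k -> i + k <= size s ->
  take k (drop i s) != [::] /\ last x (take k (drop i s)) = nth x s (i + k).-1.
Proof.
move=> k_gt0 le_s; have size_k : size (take k (drop i s)) = k.
  by rewrite size_takel // size_drop; lia.
split; first by rewrite -size_eq0 size_k -lt0n.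
rewrite -nth_last size_k nth_take ?prednK // nth_drop; congr nth; lia.
Qed.

Section Blocks.
Variables (T : eqType) (lam theta : nat) (s : seq T).
Hypotheses (theta_gt0 : 0 < theta) (theta_le : theta <= lam) (lam_lt : lam < size s).
Local Notation n := ((size s - theta + lam.-1) %/ lam).

Let lam_gt0 : 0 < lam := leq_trans theta_gt0 theta_le.

Lemma nblocks_bounds : 0 < n /\ theta + lam * n.-1 < size s <= theta + lam * n.
Proof.
have := @leq_mul_ceil lam (size s - theta) lam_gt0.
have := @ltn_mul_ceil_pred lam (size s - theta) lam_gt0.
case: n => [|n'] /=; lia.
Qed.

Lemma flatten_blocks :
  flatten (rcons [seq block lam theta s j | j <- iota 1 n] (block lam theta s n.+1)) = s.
Proof.
have [_ /andP[_ le_s]] := nblocks_bounds.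
rewrite -map_rcons -cats1 -[iota 1 n ++ _]/(iota 1 n ++ iota (1 + n) 1) -iotaD addn1.
rewrite /= {1}/block eqxx -(addn0 2) iotaDl -map_comp.
rewrite (eq_map (_ : _ =1 fun i => take lam (drop (lam * i) (drop theta s)))).
  rewrite flatten_take_drop_mul [take (lam * _) _]take_oversize ?cat_take_drop //.
  by rewrite size_drop; lia.
by move=> i; rewrite /block /= addKn drop_drop addnC.
Qed.

Lemma block_nonfinal (x : T) j : j \in iota 1 n ->
  block lam theta s j != [::] /\
  last x (block lam theta s j) = nth x s (theta.-1 + lam * j.-1).
Proof.
have [_ /andP[lt_s _]] := nblocks_bounds.
rewrite mem_iota; case: j => [|[|j]] // /andP[_ le_n]; rewrite /block /=.
  have -> : take theta s = take theta (drop 0 s) by rewrite drop0.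
  by rewrite muln0 addn0; apply: take_drop_last; lia.
have le_j : lam * j.+1 <= lam * n.-1 by rewrite leq_mul2l; lia.
rewrite subn2 /= (_ : theta.-1 + lam * j.+1 = (theta + lam * j + lam).-1); last first.
  by rewrite mulnS; lia.
by apply: take_drop_last => //; rewrite mulnS in le_j; lia.
Qed.

Lemma nonfinal_blocks_neq0 : [::] \notin [seq block lam theta s j | j <- iota 1 n].
Proof.
have x : T by case: s lam_lt => [|x].
by apply/mapP=> -[j /(block_nonfinal x)[+ _] eq0]; rewrite -eq0.
Qed.

Lemma block_final_neq0 : block lam theta s n.+1 != [::].
Proof.
have [n_gt0 /andP[lt_s _]] := nblocks_bounds.
rewrite /block; case: n n_gt0 lt_s => [|n'] //= _ lt_s.
by rewrite -size_eq0 size_take_min size_drop subn2; lia.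
Qed.

End Blocks.

Local Open Scope ring_scope.

Section Walks.
Variables (R : realFieldType) (P : Type) (w : P -> P -> R).
Hypothesis w_refl : forall x, w x x = 0.
Hypothesis w_sym : forall x y, w x y = w y x.
Hypothesis w_tri : forall x y z, w x z <= w x y + w y z.

Lemma w_ge0 x y : 0 <= w x y.
Proof. by have := w_tri x y x; rewrite w_refl (w_sym y x); lra. Qed.

Lemma walkw_ge0 x r : 0 <= walkw w x r.
Proof.
by elim: r x => [|y r IH] x //=; apply: addr_ge0; [apply: w_ge0 | apply: IH].
Qed.

Lemma walkw_cat x r1 r2 :
  walkw w x (r1 ++ r2) = walkw w x r1 + walkw w (last x r1) r2.
Proof. by elim: r1 x => [|y r IH] x /=; rewrite ?add0r // IH addrA. Qed.

Lemma walkw_last x r : w x (last x r) <= walkw w x r.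
Proof.
elim: r x => [|y r IH] x /=; first by rewrite w_refl.
by have := w_tri x y (last y r); have := IH y; lra.
Qed.

Lemma walkw_restart x y r : walkw w x r <= w x y + walkw w y r.
Proof.
case: r => [|z r] /=; first by rewrite addr0 w_ge0.
by have := w_tri x y z; lra.
Qed.

Lemma walk_weight_le_walkw x r : walk_weight w r <= walkw w x r.
Proof. by case: r => [|y r] //=; rewrite lerDr w_ge0. Qed.

Lemma w_le_walkw x y r r' : w x y <= walkw w x (r ++ y :: r').
Proof.
rewrite walkw_cat /=.
have := w_tri x (last x r) y; have := walkw_last x r; have := walkw_ge0 y r'.
lra.
Qed.

Lemma tour_weight_ge0 p : 0 <= tour_weight w p.
Proof. by case: p => [|x r] //=; rewrite addr_ge0 ?walkw_ge0 ?w_ge0. Qed.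

Variables (T : eqType) (a b : T -> P).

Definition visit (B : seq T) : seq P := map a B ++ map b B.

Definition reqw (v : T) : R := w (a v) (b v).

Definition last_reqw (B : seq T) : R :=
  if B is u :: B' then reqw (last u B') else 0.

Lemma last_reqwE x B : B != [::] -> last_reqw B = reqw (last x B).
Proof. by case: B. Qed.

Lemma walkw_blocks x Bs v Bl : [::] \notin Bs ->
  walkw w x (flatten (map visit (rcons Bs (v :: Bl)))) <=
    walkw w x (map a (flatten Bs ++ v :: Bl))
    + 2 * walk_weight w (map b (flatten Bs ++ v :: Bl))
    + 2 * \sum_(B <- Bs) last_reqw B + w (a (last v Bl)) (b v).
Proof.
elim: Bs x => [|B Bs IH] x /=.
  rewrite cats0 big_nil /visit walkw_cat /= last_map.
  by have := walkw_ge0 (b v) (map b Bl); lra.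
rewrite in_cons negb_or eq_sym => /andP[+ /IH{}IH]; case: B => [|u B] // _.
set K := flatten Bs ++ v :: Bl; set e := last u B.
have := IH (b e); rewrite -/K; set rest := flatten _ => {}IH.
have walkw_visit : walkw w x (visit (u :: B) ++ rest) = walkw w x (map a (u :: B))
    + w (a e) (b u) + walkw w (b u) (map b B) + walkw w (b e) rest.
  by rewrite /visit -catA !walkw_cat /= !last_map -/e !addrA.
have walkw_aK : walkw w x (map a ((u :: B) ++ K))
    = walkw w x (map a (u :: B)) + walkw w (a e) (map a K).
  by rewrite map_cat walkw_cat /= last_map.
have walkw_bK : walk_weight w (map b ((u :: B) ++ K))
    = walkw w (b u) (map b B) + walkw w (b e) (map b K).
  by rewrite map_cat /= walkw_cat last_map.
rewrite -catA -/K big_cons walkw_visit walkw_aK walkw_bK.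
have := walkw_restart (b e) (a e) (map a K).
have := w_tri (a e) (b e) (b u).
have := walkw_last (b u) (map b B); rewrite last_map -/e (w_sym (b e) (b u)).
have := walk_weight_le_walkw (b e) (map b K).
rewrite (w_sym (b e) (a e)) [last_reqw _]/= /reqw -/e.
lra.
Qed.

Lemma walkw_blocks_tour o Bs v Bl : [::] \notin Bs ->
  walkw w o (flatten (map visit (rcons Bs (v :: Bl)))) <=
    tour_weight w (o :: map a (flatten Bs ++ v :: Bl))
    + 3 * tour_weight w (o :: map b (flatten Bs ++ v :: Bl))
    + 2 * \sum_(B <- Bs) last_reqw B.
Proof.
move=> /(walkw_blocks o v Bl); set K := (flatten _ ++ _).
have last_aK : last o (map a K) = a (last v Bl) by rewrite map_cat last_cat /= last_map.
have last_bK : last o (map b K) = b (last v Bl) by rewrite map_cat last_cat /= last_map.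
rewrite /= last_aK last_bK.
have := w_tri (a (last v Bl)) o (b v); rewrite (w_sym _ o).
have := w_le_walkw o (b v) (map b (flatten Bs)) (map b Bl).
rewrite -[b v :: _]/(map b (v :: Bl)) -map_cat -/K.
have := walk_weight_le_walkw o (map b K).
have := w_ge0 (b (last v Bl)) o.
lra.
Qed.

End Walks.

Section Residues.
Variables (R : numDomainType) (F : nat -> R) (k : nat).
Hypothesis k_gt0 : (0 < k)%N.

Lemma sum_progression_le t n q : (forall j, 0 <= F j) -> (t < k)%N ->
  (forall i, (i < n)%N -> (t + k * i < q)%N) ->
  \sum_(i < n) F (t + k * i)%N <= \sum_(0 <= j < q | (j %% k == t)%N) F j.
Proof.
move=> F_ge0 lt_t; elim: n q => [|n IH] q lt_q.
  by rewrite big_ord0; apply: (@sumr_ge0 R nat).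
have lt_tn := lt_q n (ltnSn n).
rewrite big_ord_recr /= (big_cat_nat _ (n := (t + k * n).+1)) //=.
rewrite -[leLHS]addr0 lerD //; last by apply: (@sumr_ge0 R nat).
rewrite [leRHS]big_mkcond big_nat_recr //= -big_mkcond /=.
have -> : ((t + k * n) %% k = t)%N by rewrite addnC mulnC modnMDl modn_small.
rewrite eqxx lerD2r.
apply: IH => i lt_in.
by rewrite ltn_add2l ltn_mul2l k_gt0.
Qed.

Lemma sum_residues q :
  \sum_(t < k) \sum_(0 <= j < q | (j %% k == t)%N) F j = \sum_(0 <= j < q) F j.
Proof.
under eq_bigr do rewrite big_mkcond; rewrite exchange_big /=.
apply: eq_bigr => j _.
by rewrite -big_mkcond (big_pred1 (Ordinal (ltn_pmod j k_gt0))).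
Qed.

End Residues.

Lemma mean_over_ffun (R : numFieldType) (I J : finType) (F : I -> J -> R) :
  (0 < #|J|)%N ->
  (#|J|%:R ^+ #|I|)^-1 * \sum_(f : {ffun I -> J}) \sum_i F i (f i)
  = \sum_i #|J|%:R^-1 * \sum_j F i j.
Proof.
move=> J_gt0; rewrite exchange_big mulr_sumr; apply: eq_bigr => i _.
have card_I : #|I| = #|I|.-1.+1 by rewrite prednK //; apply/card_gt0P; exists i.
(* Distribute the product with factor [F i j] at coordinate [i] and [1]
   elsewhere: each value of [f i] is counted #|J| ^ (#|I| - 1) times. *)
have := @bigA_distr_bigA R 0 1 *%R +%R I J (fun i' j => if i' == i then F i j else 1).
rewrite (bigD1 i) //= eqxx.
under [X in _ * X]eq_bigr => i' /negbTE -> do rewrite sumr_const.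
rewrite prodr_const cardC1 => sum_coord.
have -> : \sum_(f : {ffun I -> J}) F i (f i) = #|J|%:R ^+ #|I|.-1 * \sum_j F i j.
  rewrite mulrC sum_coord; apply: eq_bigr => f _.
  by rewrite (bigD1 i) //= eqxx big1 ?mulr1 // => i' /negbTE ->.
have J_neq0 : #|J|%:R != 0 :> R by rewrite pnatr_eq0 -lt0n.
by rewrite {1}card_I exprS invfM -mulrA mulKf // expf_neq0.
Qed.

Section Route.
Variables (R : realFieldType) (h m : nat) (w : point h m -> point h m -> R).
Hypothesis w_refl : forall x, w x x = 0.
Hypothesis w_sym : forall x y, w x y = w y x.
Hypothesis w_tri : forall x y z, w x z <= w x y + w y z.
Variable lam : nat.
Hypothesis lam_gt0 : (0 < lam)%N.

Local Notation Src := (@Src h m).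
Local Notation Dst := (@Dst h m).
Local Notation reqw := (reqw w Src Dst).
Local Notation visit := (visit Src Dst).
Local Notation last_reqw := (last_reqw w Src Dst).

Lemma route_small theta o J : (size J <= lam)%N -> route lam theta o J = o :: visit J.
Proof. by rewrite /route => ->. Qed.

Lemma route_large theta o J : (lam < size J)%N ->
  let n := ((size J - theta + lam.-1) %/ lam)%N in
  route lam theta o J = o :: flatten (map visit
    (rcons [seq block lam theta J j | j <- iota 1 n] (block lam theta J n.+1))).
Proof.
move=> large n; rewrite /route leqNgt large /= -/n map_rcons -map_comp -cats1.
by rewrite iotaD map_cat.
Qed.

Lemma route_weight_le o (J : seq 'I_m) (x : 'I_m) t : (t < lam)%N ->
  walk_weight w (route lam t.+1 o J) <=
    tour_weight w (o :: map Src J) + 3 * tour_weight w (o :: map Dst J)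
    + 2 * \sum_(0 <= k < size J | (k %% lam == t)%N) reqw (nth x J k).
Proof.
move=> lt_t.
have sum_ge0 : 0 <= \sum_(0 <= k < size J | (k %% lam == t)%N) reqw (nth x J k).
  by apply: sumr_ge0 => k _; apply: w_ge0.
have blocks_le Bs v Bl : [::] \notin Bs -> flatten (rcons Bs (v :: Bl)) = J ->
    walk_weight w (o :: flatten (map visit (rcons Bs (v :: Bl)))) <=
    tour_weight w (o :: map Src J) + 3 * tour_weight w (o :: map Dst J)
    + 2 * \sum_(B <- Bs) last_reqw B.
  by rewrite flatten_rcons => nil_Bs <-; apply: walkw_blocks_tour.
case: (leqP (size J) lam) => [/route_small-> | large].
  case: J sum_ge0 blocks_le => [|v Bl] sum_ge0 blocks_le.
    by rewrite /tour_weight /= w_refl; lra.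
  move: sum_ge0 (blocks_le [::] v Bl isT (cats0 _)); rewrite big_nil /= cats0; lra.
have theta_gt0 := ltn0Sn t.
rewrite route_large //; set n := (_ %/ lam)%N.
have [_ /andP[lt_J _]] := nblocks_bounds theta_gt0 lt_t large; rewrite -/n in lt_J.
have := flatten_blocks theta_gt0 lt_t large.
have := block_final_neq0 theta_gt0 lt_t large.
rewrite -/n; case: (block _ _ _ _) => [|v Bl] // _ /(blocks_le _ v Bl).
move=> /(_ (nonfinal_blocks_neq0 theta_gt0 lt_t large)).
suff : \sum_(B <- [seq block lam t.+1 J j | j <- iota 1 n]) last_reqw B <=
    \sum_(0 <= k < size J | (k %% lam == t)%N) reqw (nth x J k) by lra.
rewrite big_map (eq_big_seq (fun j => reqw (nth x J (t + lam * j.-1)))); last first.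
  by move=> j /(block_nonfinal theta_gt0 lt_t large x)[ne0 <-]; apply: last_reqwE.
have -> : iota 1 n = index_iota 1 n.+1 by rewrite /index_iota subn1.
rewrite big_add1 big_mkord /=.
apply: sum_progression_le => // [k | i lt_in]; first exact: w_ge0.
have : (lam * i <= lam * n.-1)%N by rewrite leq_mul2l; lia.
lia.
Qed.

Lemma mean_route_weight o (J : seq 'I_m) :
  lam%:R^-1 * \sum_(t < lam) walk_weight w (route lam t.+1 o J) <=
    tour_weight w (o :: map Src J) + 3 * tour_weight w (o :: map Dst J)
    + 2 / lam%:R * \sum_(v <- J) reqw v.
Proof.
have Ts_ge0 := tour_weight_ge0 w_refl w_sym w_tri (o :: map Src J).
have Tt_ge0 := tour_weight_ge0 w_refl w_sym w_tri (o :: map Dst J).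
have lam_neq0 : lam%:R != 0 :> R by rewrite pnatr_eq0 -lt0n.
case: J Ts_ge0 Tt_ge0 => [|x J] Ts_ge0 Tt_ge0.
  rewrite big1 ?mulr0 ?big_nil; first lra.
  by move=> t _; rewrite route_small.
set A := tour_weight w _ + 3 * tour_weight w _.
have le_sum : \sum_(t < lam) walk_weight w (route lam t.+1 o (x :: J))
    <= lam%:R * A + 2 * \sum_(v <- x :: J) reqw v.
  have -> : lam%:R * A = \sum_(t < lam) A by rewrite sumr_const card_ord mulr_natl.
  rewrite (big_nth x) -(sum_residues _ lam_gt0) mulr_sumr -big_split /=.
  apply: ler_sum => t _.
  exact: route_weight_le (ltn_ord t).
apply: le_trans (ler_wpM2l _ le_sum) _; first by rewrite invr_ge0 ler0n.
by rewrite mulrDr mulKf // mulrCA mulrA.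
Qed.

End Route.

Theorem lemma7 (R : realFieldType) (h m lam : nat)
    (w : point h m -> point h m -> R)
    (w_refl : forall a, w a a = 0)
    (w_sym : forall a b, w a b = w b a)
    (w_tri : forall a b c, w a c <= w a b + w b c)
    (lam_pos : (0 < lam)%N)
    (J : 'I_h -> seq 'I_m)
    (HJ : perm_eq (flatten [seq J i | i <- enum 'I_h]) (enum 'I_m)) :
  (lam%:R ^+ h)^-1 *
    (\sum_(th : {ffun 'I_h -> 'I_lam})
        \sum_(i < h) walk_weight w (route lam (th i).+1 (Veh m i) (J i)))
  <= 2 / lam%:R * (\sum_(j < m) w (Src h j) (Dst h j))
     + 3 * ((\sum_(i < h) tour_weight w (Veh m i :: map (@Src h m) (J i)))
          + (\sum_(i < h) tour_weight w (Veh m i :: map (@Dst h m) (J i)))).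
Proof.
have := mean_over_ffun
  (fun i (t : 'I_lam) => walk_weight w (route lam t.+1 (Veh m i) (J i))).
rewrite !card_ord => -> //.
set Ts := \sum_(i < h) tour_weight w (_ :: map (@Src h m) _).
set Tt := \sum_(i < h) tour_weight w (_ :: map (@Dst h m) _).
have Ts_ge0 : 0 <= Ts by apply: sumr_ge0 => i _; exact: tour_weight_ge0.
have requests : \sum_(i < h) \sum_(v <- J i) reqw w (@Src h m) (@Dst h m) v
    = \sum_(j < m) w (Src h j) (Dst h j).
  by rewrite -[RHS]big_enum -(perm_big _ HJ) big_flatten /= big_map -big_enum.
apply: le_trans (ler_sum _ (fun i _ => mean_route_weight w_refl w_sym w_tri
  lam_pos (Veh m i) (J i))) _.
have -> : \sum_(i < h) (tour_weight w (Veh m i :: map (@Src h m) (J i))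
      + 3 * tour_weight w (Veh m i :: map (@Dst h m) (J i))
      + 2 / lam%:R * \sum_(v <- J i) reqw w (@Src h m) (@Dst h m) v)
    = Ts + 3 * Tt + 2 / lam%:R * \sum_(j < m) w (Src h j) (Dst h j).
  by rewrite -requests !mulr_sumr -!big_split.
lra.
Qed.
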